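(* Let $R$ be a unital ring and let $(P,Q,\psi)$ be a unital $R$-system satisfying Condition (FS'). Let $(S,T,\sigma,B)$ be an injective, surjective and graded covariant representation of $(P,Q,\psi)$ such that (a) $(S,T,\sigma,B)$ is faithful, and (b) $\psi$ is surjective. Then $B$ is strongly $\mathbb{Z}$-graded.
   Context: A $\mathbb{Z}$-graded ring $B=\bigoplus_{i\in\mathbb{Z}}B_i$ is strongly graded if $B_mB_n=B_{m+n}$ for all $m,n$ (where $XY$ is the additive subgroup generated by products). An $R$-system is a triple $(P,Q,\psi)$ with $P,Q$ $R$-bimodules and $\psi:P\otimes_RQ\to R$ an $R$-bimodule homomorphism; it is unital if $R$ is unital and $1_R$ acts as identity on both sides of $P$ and $Q$. A covariant representation of $(P,Q,\psi)$ is a tuple $(S,T,\sigma,B)$ with $B$ a ring, $S:P\to B$, $T:Q\to B$ additive maps, $\sigma:R\to B$ a ring homomorphism, such that $S(pr)=S(p)\sigma(r)$, $S(rp)=\sigma(r)S(p)$, $T(qr)=T(q)\sigma(r)$, $T(rq)=\sigma(r)T(q)$ and $\sigma(\psi(p\otimes q))=S(p)T(q)$. It is injective if $\sigma$ is injective, surjective if $B$ is generated as a ring by $\sigma(R)\cup S(P)\cup T(Q)$, and graded if it is surjective and $B$ carries a $\mathbb{Z}$-grading with $\sigma(R)\subseteq B_0$, $T(Q)\subseteq B_1$, $S(P)\subseteq B_{-1}$. For $q\in Q,p\in P$ let $\theta_{q,p}:Q\to Q$, $x\mapsto q\psi(p\otimes x)$, and $\theta_{p,q}:P\to P$, $y\mapsto\psi(y\otimes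 q)p$; $\mathcal{F}_P(Q)$ (resp. $\mathcal{F}_Q(P)$) is the additive group generated by all $\theta_{q,p}$ (resp. $\theta_{p,q}$). Condition (FS'): there exist $\Theta\in\mathcal{F}_P(Q)$, $\Phi\in\mathcal{F}_Q(P)$ with $\Theta(q)=q$, $\Phi(p)=p$ for all $q\in Q,p\in P$. Let $\Delta:R\to\mathrm{End}(Q_R)$, $\Delta(r)(q)=rq$. Under (FS') (which implies the local version (FS)) there is a unique ring homomorphism $\pi_{T,S}:\mathcal{F}_P(Q)\to B$ with $\pi_{T,S}(\theta_{q,p})=T(q)S(p)$; in the unital case $\Delta(1_R)=\mathrm{id}_Q\in\mathcal{F}_P(Q)$, and $(S,T,\sigma,B)$ is called faithful if $\pi_{T,S}(\Delta(1_R))=\sigma(1_R)$. *)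

From HB Require Import structures.
From mathcomp Require Import all_boot all_order all_algebra.
Set Implicit Arguments. Unset Strict Implicit. Unset Printing Implicit Defensive.
Import Order.TTheory GRing.Theory Num.Theory.
Local Open Scope ring_scope.

Definition is_ring_mul (B : zmodType) (mul : B -> B -> B) : Prop :=
  [/\ forall x y z, mul x (mul y z) = mul (mul x y) z,
      forall x y z, mul (x + y) z = mul x z + mul y z &
      forall x y z, mul x (y + z) = mul x y + mul x z].

Definition is_unital_bimodule (R : pzRingType) (M : zmodType)
    (lM : R -> M -> M) (rM : M -> R -> M) : Prop :=
  [/\ (forall r m n, lM r (m + n) = lM r m + lM r n)
      /\ (forall r s m, lM (r + s) m = lM r m + lM s m),
      (forall r m n, rM (m + n) r = rM m r + rM n r)
      /\ (forall r s m, rM m (r + s) = rM m r + rM m s),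
      (forall r s m, lM (r * s) m = lM r (lM s m))
      /\ (forall r s m, rM m (r * s) = rM (rM m r) s),
      forall r s m, rM (lM r m) s = lM r (rM m s) &
      (forall m, lM 1 m = m) /\ (forall m, rM m 1 = m)].

(* An R-bimodule homomorphism psi : P (x)_R Q -> R, given (via the universal
   property of the tensor product) as an R-balanced biadditive map
   psi p q = psi(p (x) q) which is left R-linear in p and right R-linear in q. *)
Definition is_bimod_pairing (R : pzRingType) (P Q : zmodType)
    (lP : R -> P -> P) (rP : P -> R -> P) (lQ : R -> Q -> Q) (rQ : Q -> R -> Q)
    (psi : P -> Q -> R) : Prop :=
  [/\ forall p p' q, psi (p + p') q = psi p q + psi p' q,
      forall p q q', psi p (q + q') = psi p q + psi p q',
      forall p r q, psi (rP p r) q = psi p (lQ r q),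
      forall r p q, psi (lP r p) q = r * psi p q &
      forall p q r, psi p (rQ q r) = psi p q * r].

Definition thetaQ (R : pzRingType) (P Q : zmodType) (rQ : Q -> R -> Q)
    (psi : P -> Q -> R) (q : Q) (p : P) : Q -> Q :=
  fun x => rQ q (psi p x).
Definition thetaP (R : pzRingType) (P Q : zmodType) (lP : R -> P -> P)
    (psi : P -> Q -> R) (p : P) (q : Q) : P -> P :=
  fun y => lP (psi y q) p.

(* Condition (FS'): id_Q is in F_P(Q) and id_P is in F_Q(P).  Elements of
   F_P(Q) (resp. F_Q(P)) are finite sums of theta's (the set of generators is
   closed under negation: -theta_{q,p} = theta_{-q,p}). *)
Definition condFS' (R : pzRingType) (P Q : zmodType)
    (lP : R -> P -> P) (rQ : Q -> R -> Q) (psi : P -> Q -> R) : Prop :=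
  (exists s : seq (Q * P),
      forall x : Q, \sum_(qp <- s) thetaQ rQ psi qp.1 qp.2 x = x) /\
  (exists s : seq (P * Q),
      forall y : P, \sum_(pq <- s) thetaP lP psi pq.1 pq.2 y = y).

(* psi : P (x)_R Q -> R is surjective; elements of P (x)_R Q are finite sums of
   elementary tensors. *)
Definition psi_surjective (R : pzRingType) (P Q : zmodType)
    (psi : P -> Q -> R) : Prop :=
  forall r : R, exists s : seq (P * Q), r = \sum_(pq <- s) psi pq.1 pq.2.

Definition is_covariant_rep (R : pzRingType) (P Q B : zmodType)
    (lP : R -> P -> P) (rP : P -> R -> P) (lQ : R -> Q -> Q) (rQ : Q -> R -> Q)
    (psi : P -> Q -> R) (mul : B -> B -> B)
    (S : P -> B) (T : Q -> B) (sigma : R -> B) : Prop :=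
  [/\ (forall p p', S (p + p') = S p + S p')
      /\ (forall q q', T (q + q') = T q + T q'),
      (* sigma is a ring homomorphism (B possibly non-unital) *)
      (forall r s, sigma (r + s) = sigma r + sigma s)
      /\ (forall r s, sigma (r * s) = mul (sigma r) (sigma s)),
      (forall p r, S (rP p r) = mul (S p) (sigma r))
      /\ (forall r p, S (lP r p) = mul (sigma r) (S p)),
      (forall q r, T (rQ q r) = mul (T q) (sigma r))
      /\ (forall r q, T (lQ r q) = mul (sigma r) (T q)) &
      forall p q, sigma (psi p q) = mul (S p) (T q)].

Definition gen_subring (B : zmodType) (mul : B -> B -> B) (G : B -> Prop)
    (x : B) : Prop :=
  forall A : B -> Prop,
    A 0 -> (forall a b, A a -> A b -> A (a - b)) ->
    (forall a b, A a -> A b -> A (mul a b)) ->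
    (forall g, G g -> A g) -> A x.

Definition rep_surjective (R : pzRingType) (P Q B : zmodType)
    (mul : B -> B -> B) (S : P -> B) (T : Q -> B) (sigma : R -> B) : Prop :=
  forall x : B, gen_subring mul
    (fun b => (exists r, b = sigma r) \/ (exists p, b = S p) \/
              (exists q, b = T q)) x.

Definition rep_injective (R : pzRingType) (B : zmodType) (sigma : R -> B)
  : Prop := injective sigma.

Definition is_Zgrading (B : zmodType) (mul : B -> B -> B)
    (Bg : int -> B -> Prop) : Prop :=
  [/\ forall i, Bg i 0,
      forall i x y, Bg i x -> Bg i y -> Bg i (x - y),
      forall m n x y, Bg m x -> Bg n y -> Bg (m + n) (mul x y),
      forall x, exists (s : seq int) (f : int -> B),
        (forall i, Bg i (f i)) /\ x = \sum_(i <- s) f i &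
      forall (s : seq int) (f : int -> B), uniq s ->
        (forall i, i \in s -> Bg i (f i)) ->
        \sum_(i <- s) f i = 0 -> forall i, i \in s -> f i = 0].

Definition rep_graded (R : pzRingType) (P Q B : zmodType)
    (mul : B -> B -> B) (S : P -> B) (T : Q -> B) (sigma : R -> B)
    (Bg : int -> B -> Prop) : Prop :=
  [/\ rep_surjective mul S T sigma, is_Zgrading mul Bg,
      forall r, Bg 0 (sigma r), forall q, Bg 1 (T q) &
      forall p, Bg (-1) (S p)].

(* faithful: pi_{T,S}(Delta(1_R)) = sigma(1_R), where Delta(1_R) = (q |-> 1 q)
   is written as a sum of theta_{q_i,p_i} in F_P(Q) and
   pi_{T,S}(sum theta_{q_i,p_i}) = sum T(q_i) S(p_i) *)
Definition rep_faithful (R : pzRingType) (P Q B : zmodType)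
    (lQ : R -> Q -> Q) (rQ : Q -> R -> Q) (psi : P -> Q -> R)
    (mul : B -> B -> B) (S : P -> B) (T : Q -> B) (sigma : R -> B) : Prop :=
  exists s : seq (Q * P),
    (forall x : Q, \sum_(qp <- s) thetaQ rQ psi qp.1 qp.2 x = lQ 1 x) /\
    \sum_(qp <- s) mul (T qp.1) (S qp.2) = sigma 1.

(* strongly graded: B_m B_n = B_{m+n}, XY = additive subgroup generated by
   products (= finite sums of products xy, x in X, y in Y, since the set of
   products is closed under negation) *)
Definition strongly_graded (B : zmodType) (mul : B -> B -> B)
    (Bg : int -> B -> Prop) : Prop :=
  forall (m n : int) (x : B),
    Bg (m + n) x <->
    exists s : seq (B * B),
      (forall ab, ab \in s -> Bg m ab.1 /\ Bg n ab.2) /\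
      x = \sum_(ab <- s) mul ab.1 ab.2.

From HB Require Import structures.
From mathcomp Require Import all_boot all_order all_algebra.
Import GRing.Theory.
Set Implicit Arguments. Unset Strict Implicit.
Local Open Scope ring_scope.

(* Let B = (+)_k B_k be a Z-graded, possibly non-unital ring.
   The inclusions B_m B_n <= B_(m+n) always hold; strong gradedness is the
   reverse inclusions.  If B has a unit e and, for every k, e is a finite sum
   of products b a with b in B_k and a in B_(-k), then any x in B_(m+n) equals
   e x = sum b (a x) with b in B_m and a x in B_n, so B is strongly graded.
   Moreover such decompositions of e multiply: from degrees a and b one gets
   degree a + b; hence decompositions in degrees 1 and -1 suffice.
   For the theorem, e = sigma(1): it fixes the generators sigma(R), S(P), T(Q)
   of B (unital R-system), hence all of B by surjectivity of the
   representation.  Faithfulness writes sigma(1) = sum T(q_i) S(p_i), a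
   degree 1 decomposition, and surjectivity of psi writes
   sigma(1) = sigma(sum psi(p_j, q_j)) = sum S(p_j) T(q_j), one of degree -1.
   The file first develops the elementary algebra of possibly non-unital
   rings, then the generated-subring induction, then graded rings, and
   finally derives the theorem. *)

Section NonUnitalRing.
Variables (B : zmodType) (mul : B -> B -> B).
Hypothesis HB : is_ring_mul mul.

Lemma mulA x y z : mul x (mul y z) = mul (mul x y) z.
Proof. by case: HB. Qed.

Lemma mulDl x y z : mul (x + y) z = mul x z + mul y z.
Proof. by case: HB. Qed.

Lemma mulDr x y z : mul x (y + z) = mul x y + mul x z.
Proof. by case: HB. Qed.

Lemma mul0x y : mul 0 y = 0.
Proof. by apply: (addrI (mul 0 y)); rewrite addr0 -mulDl addr0. Qed.

Lemma mulx0 y : mul y 0 = 0.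
Proof. by apply: (addrI (mul y 0)); rewrite addr0 -mulDr addr0. Qed.

Lemma mulxB x a b : mul x (a - b) = mul x a - mul x b.
Proof.
suff mulxN : mul x (- b) = - mul x b by rewrite mulDr mulxN.
by apply: (addrI (mul x b)); rewrite -mulDr !subrr mulx0.
Qed.

Lemma mulBx x a b : mul (a - b) x = mul a x - mul b x.
Proof.
suff mulNx : mul (- b) x = - mul b x by rewrite mulDl mulNx.
by apply: (addrI (mul b x)); rewrite -mulDl !subrr mul0x.
Qed.

Lemma mul_suml (I : Type) (s : seq I) (F : I -> B) y :
  mul (\sum_(i <- s) F i) y = \sum_(i <- s) mul (F i) y.
Proof. exact: (big_morph (mul^~ y) (fun a b => mulDl a b y) (mul0x y)). Qed.

Lemma mul_sumr (I : Type) (s : seq I) (F : I -> B) y :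
  mul y (\sum_(i <- s) F i) = \sum_(i <- s) mul y (F i).
Proof. exact: (big_morph (mul y) (mulDr y) (mulx0 y)). Qed.

Lemma gen_subring_unit (G : B -> Prop) (e x : B) :
  gen_subring mul G x ->
  (forall g, G g -> mul e g = g /\ mul g e = g) ->
  mul e x = x /\ mul x e = x.
Proof.
move=> x_gen eG; apply: (x_gen (fun x => mul e x = x /\ mul x e = x)).
- by rewrite mul0x mulx0.
- by move=> a b [ea ae] [eb be]; rewrite mulxB mulBx ea ae eb be.
- by move=> a b [ea _] [_ be]; rewrite mulA ea -mulA be.
- exact: eG.
Qed.

End NonUnitalRing.

Lemma additive_sum (U V : zmodType) (f : U -> V) :
  (forall x y, f (x + y) = f x + f y) ->
  forall (I : Type) (s : seq I) (F : I -> U),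
    f (\sum_(i <- s) F i) = \sum_(i <- s) f (F i).
Proof.
move=> fD; have f0 : f 0 = 0 by apply: (addrI (f 0)); rewrite -fD !addr0.
by move=> I s F; apply: (big_morph f fD f0).
Qed.

Section GradedRing.
Variables (B : zmodType) (mul : B -> B -> B) (Bg : int -> B -> Prop).
Hypotheses (HB : is_ring_mul mul) (Hg : is_Zgrading mul Bg).

Lemma Bg_mul {m n x y} : Bg m x -> Bg n y -> Bg (m + n) (mul x y).
Proof. by case: Hg => _ _ + _ _; apply. Qed.

Lemma Bg_add i x y : Bg i x -> Bg i y -> Bg i (x + y).
Proof.
case: Hg => Bg0 BgB _ _ _ hx hy.
by have := BgB i x (0 - y) hx (BgB i 0 y (Bg0 i) hy); rewrite sub0r opprK.
Qed.

Lemma Bg_sum_mul m n (s : seq (B * B)) :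
  (forall ab, ab \in s -> Bg m ab.1 /\ Bg n ab.2) ->
  Bg (m + n) (\sum_(ab <- s) mul ab.1 ab.2).
Proof.
case: Hg => Bg0 _ _ _ _.
elim: s => [|a s IH] hs; first by rewrite big_nil; apply: Bg0.
rewrite big_cons; apply: Bg_add.
  by have [h1 h2] := hs a (mem_head _ _); apply: Bg_mul.
by apply: IH => ab hab; apply: hs; rewrite in_cons hab orbT.
Qed.

Variable e : B.
Hypotheses (eL : forall x, mul e x = x) (eR : forall x, mul x e = x).

Definition unit_split (k : int) : Prop :=
  exists s : seq (B * B),
    (forall ab, ab \in s -> Bg k ab.1 /\ Bg (- k) ab.2) /\
    e = \sum_(ab <- s) mul ab.1 ab.2.

(* e = sum b a with b a in B_k B_(-k) and e = sum d c with d c in B_l B_(-l)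
   give e = sum (b d) (c a) = e e, with b d in B_(k+l), c a in B_(-(k+l)). *)
Lemma unit_split_add {k l} : unit_split k -> unit_split l -> unit_split (k + l).
Proof.
case=> s1 [h1 e1] [s2 [h2 e2]].
exists [seq (mul x.1 y.1, mul y.2 x.2) | x <- s1, y <- s2]; split.
  move=> ab /allpairsP [[x y] [hx hy ->]] /=.
  have [hx1 hx2] := h1 x hx; have [hy1 hy2] := h2 y hy.
  by split; [apply: Bg_mul | rewrite opprD addrC; apply: Bg_mul].
rewrite big_allpairs_dep /= {1}e1; apply: eq_bigr => x _.
rewrite -{1}[x.1]eR {1}e2 mul_sumr // mul_suml //; apply: eq_bigr => y _.
by rewrite -!mulA.
Qed.

Lemma unit_split_all : unit_split 1 -> unit_split (-1) -> forall k, unit_split k.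
Proof.
move=> E1 Em1.
have E0 : unit_split 0 by have := unit_split_add E1 Em1; rewrite subrr.
case=> n; last rewrite NegzE; elim: n => [|n IH] //.
  by have := unit_split_add IH E1; rewrite -PoszD addn1.
by have := unit_split_add IH Em1; rewrite -opprD -PoszD addn1.
Qed.

(* A unital graded ring whose unit lies in B_1 B_(-1) and in B_(-1) B_1 is
   strongly graded: x in B_(m+n) is e x = sum b (a x), b in B_m, a x in B_n. *)
Lemma strongly_graded_of_unit_split :
  unit_split 1 -> unit_split (-1) -> strongly_graded mul Bg.
Proof.
move=> E1 Em1 m n x; split; last by case=> s [hs ->]; exact: Bg_sum_mul.
move=> hx; have [s [hs es]] := unit_split_all E1 Em1 m.
exists [seq (ab.1, mul ab.2 x) | ab <- s]; split.
  move=> ab /mapP [cd hcd ->] /=; have [h1 h2] := hs cd hcd; split => //.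
  by have := Bg_mul h2 hx; rewrite addrA addNr add0r.
rewrite big_map -{1}(eL x) es mul_suml //; apply: eq_bigr => ab _ /=.
by rewrite mulA.
Qed.

End GradedRing.

Theorem mainTheorem4 (R : pzRingType) (P Q B : zmodType)
    (lP : R -> P -> P) (rP : P -> R -> P) (lQ : R -> Q -> Q) (rQ : Q -> R -> Q)
    (psi : P -> Q -> R) (mul : B -> B -> B)
    (S : P -> B) (T : Q -> B) (sigma : R -> B) (Bg : int -> B -> Prop)
    (HB : is_ring_mul mul)
    (HP : is_unital_bimodule lP rP) (HQ : is_unital_bimodule lQ rQ)
    (Hpsi : is_bimod_pairing lP rP lQ rQ psi)
    (HFS : condFS' lP rQ psi)
    (Hrep : is_covariant_rep lP rP lQ rQ psi mul S T sigma)
    (Hinj : rep_injective sigma)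
    (Hgr : rep_graded mul S T sigma Bg)
    (Hfaith : rep_faithful lQ rQ psi mul S T sigma)
    (Hsurj : psi_surjective psi) :
  strongly_graded mul Bg.
Proof.
case: Hgr => Hgen Hg _ T_deg1 S_degN1.
case: Hrep => _ [sigmaD sigmaM] [Sr Sl] [Tr Tl] sigma_psi.
case: HP => _ _ _ _ [P1l P1r]; case: HQ => _ _ _ _ [Q1l Q1r].
have sigma1_unit x : mul (sigma 1) x = x /\ mul x (sigma 1) = x.
  apply: (gen_subring_unit HB (Hgen x)) => g [[r ->]|[[p ->]|[q ->]]].
  - by rewrite -!sigmaM mul1r mulr1.
  - by rewrite -Sr -Sl P1l P1r.
  - by rewrite -Tr -Tl Q1l Q1r.
apply: (strongly_graded_of_unit_split HB Hg (e := sigma 1)).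
- by move=> x; case: (sigma1_unit x).
- by move=> x; case: (sigma1_unit x).
- (* faithfulness: sigma(1) = sum T(q_i) S(p_i) *)
  have [s [_ hs]] := Hfaith.
  exists [seq (T qp.1, S qp.2) | qp <- s]; split; last by rewrite big_map.
  by move=> ab /mapP [qp _ ->]; split; [apply: T_deg1 | apply: S_degN1].
- (* psi onto: sigma(1) = sigma(sum psi(p_j, q_j)) = sum S(p_j) T(q_j) *)
  have [s hs] := Hsurj 1.
  exists [seq (S pq.1, T pq.2) | pq <- s]; split.
    by move=> ab /mapP [pq _ ->]; rewrite opprK; split; [apply: S_degN1 | apply: T_deg1].
  rewrite big_map hs (additive_sum sigmaD); apply: eq_bigr => pq _; exact: sigma_psi.
Qed.
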